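(* Let $r\ge 2$, let $H$ be a digraph (possibly with loops), let $D$ be an $H$-colored $r$-partite tournament, let $k \geq 5$, and let $(u,v)$ be an arc of $C_{H}^{k-1}(D)$. If $(u,v)$ is an asymmetric arc of $C_{H}^{k-1}(D)$ (i.e., $(v,u)\notin A(C_{H}^{k-1}(D))$), then $d_{D}(u,v) \leq 2$.
   Context: All digraphs are finite. An $r$-partite tournament is a digraph whose vertex set is partitioned into $r$ disjoint independent sets such that every two vertices in different classes are joined by exactly one arc (an asymmetric arc). $d_D(u,v)$ is the length of a shortest directed $uv$-path in $D$. $D$ has no loops and comes with a map $\rho: A(D)\to V(H)$. For a walk $W=(x_0,\ldots,x_n)$ in $D$, there is an obstruction on $x_i$ if $(\rho(x_{i-1},x_i),\rho(x_i,x_{i+1})) \notin A(H)$; for an open walk this is considered at internal vertices $x_i$, $1\le i\le n-1$, for a closed walk at all $i\in\{0,\ldots,n-1\}$ with indices modulo $n$. $O_H(W)$ is the set of indices with an obstruction; the $H$-length is $l_H(W)=|O_H(W)|+1$ for open $W$ and $|O_H(W)|$ for closed $W$. The $(k-1,H)$-closure $C_H^{k-1}(D)$ is the digraph on $V(D)$ in which $(x,y)$ is an arc iff there is a directed $xy$-path in $D$ of $H$-length at most $k-1$. *)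

From mathcomp Require Import all_boot.
Set Implicit Arguments. Unset Strict Implicit. Unset Printing Implicit Defensive.

(* An H-coloring of D is a map rho : V -> V -> W (only its values on arcs matter),
   where H is a digraph on W with arc relation h (loops allowed). *)

Definition multipartite_tournament (V : finType) (r : nat)
  (a : rel V) (part : V -> 'I_r) : Prop :=
  (forall i : 'I_r, exists x, part x = i) /\
  (forall x y, part x = part y -> ~~ a x y) /\
  (forall x y, part x != part y -> (a x y || a y x) && ~~ (a x y && a y x)).

(* A directed path x0 = u, x1, ..., xn (with p = [:: x1; ...; xn]) in D:
   consecutive vertices joined by arcs, all vertices distinct. *)
Definition dpath (V : finType) (a : rel V) (u : V) (p : seq V) : bool :=
  path a u p && uniq (u :: p).

Definition arc_colors (V W : Type) (rho : V -> V -> W) (u : V) (p : seq V) : seq W :=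
  pairmap rho u p.

Definition n_obstructions (V W : Type) (h : rel W) (rho : V -> V -> W)
  (u : V) (p : seq V) : nat :=
  let cs := arc_colors rho u p in
  count (fun c : W * W => ~~ h c.1 c.2) (zip cs (behead cs)).

Definition H_length (V W : Type) (h : rel W) (rho : V -> V -> W)
  (u : V) (p : seq V) : nat :=
  (n_obstructions h rho u p).+1.

(* (x,y) is an arc of the (m,H)-closure C_H^m(D): there is a directed xy-path
   in D of H-length at most m (x <> y, the closure has no loops). *)
Definition closure_arc (V W : finType) (a : rel V) (h : rel W)
  (rho : V -> V -> W) (m : nat) (x y : V) : Prop :=
  x != y /\ exists p : seq V, [/\ dpath a x p, last x p = y & H_length h rho x p <= m].

Definition dist_le (V : finType) (a : rel V) (u v : V) (n : nat) : Prop :=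
  exists p : seq V, [/\ dpath a u p, last u p = v & size p <= n].

From mathcomp Require Import all_boot.

(* A directed path of length at most k - 1 has H-length at most k - 1, so the
   asymmetry of (u, v) in the closure forces d(v, u) >= 5.  If u and v lie in
   different classes, the arc joining them therefore goes from u to v.
   Otherwise, if moreover d(u, v) > 2, every vertex outside the class of u is
   either an out-neighbour of both u and v or an in-neighbour of both.  A
   uv-path starts at a vertex of the first kind and ends at one of the second;
   as classes are independent, it crosses from the first kind to the second
   either directly or through a single vertex of the class of u, which yields
   a vu-walk of length 3 or 4.  Shortening walks to paths gives d(v, u) <= 4. *)

Set Implicit Arguments.
Unset Strict Implicit.
Unset Printing Implicit Defensive.

Lemma n_obstructions_le (V W : Type) (h : rel W) (rho : V -> V -> W)
    (x : V) (p : seq V) :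
  n_obstructions h rho x p <= (size p).-1.
Proof.
apply: leq_trans (count_size _ _) _.
rewrite size_zip size_behead /arc_colors size_pairmap.
by case: (size p) => //= n; rewrite minnE subSnn subn1.
Qed.

Lemma H_length_le_size (V W : Type) (h : rel W) (rho : V -> V -> W)
    (x : V) (p : seq V) :
  0 < size p -> H_length h rho x p <= size p.
Proof.
by case: p => // y p _; rewrite /H_length ltnS (n_obstructions_le _ _ _ (y :: p)).
Qed.

Section Distance.

Variables (V : finType) (a : rel V).

Lemma dist_le_walk (x : V) (p : seq V) (n : nat) :
  path a x p -> size p <= n -> dist_le a x (last x p) n.
Proof.
move=> walk_p size_p; case: (shortenP walk_p) => q path_q uniq_q sub_qp.
exists q; split=> //; first by rewrite /dpath path_q.
apply: leq_trans size_p; apply: uniq_leq_size sub_qp.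
by case/andP: uniq_q.
Qed.

Lemma dist_le_widen (x y : V) (n m : nat) :
  n <= m -> dist_le a x y n -> dist_le a x y m.
Proof.
by move=> le_nm [p [path_p last_p size_p]]; exists p; split=> //; apply: leq_trans le_nm.
Qed.

Lemma closure_arc_of_dist_le (W : finType) (h : rel W) (rho : V -> V -> W)
    (m : nat) (x y : V) :
  x != y -> dist_le a x y m -> closure_arc a h rho m x y.
Proof.
move=> neq_xy [p [path_p last_p size_p]]; split=> //; exists p; split=> //.
apply: leq_trans size_p; apply: H_length_le_size.
by case: p last_p {path_p} => // /eqP; rewrite (negPf neq_xy).
Qed.

End Distance.

Section MultipartiteTournament.

Variables (r : nat) (V : finType) (a : rel V) (part : V -> 'I_r).
Hypothesis tourn : multipartite_tournament a part.

Lemma arcF_same_part (x y : V) : part x = part y -> a x y = false.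
Proof. by case: tourn => _ [indep _] /indep /negbTE. Qed.

Lemma arc_part_neq (x y : V) : a x y -> part x != part y.
Proof. by apply: contraTneq => /arcF_same_part ->. Qed.

Lemma arc_tournament (x y : V) : part x != part y -> a y x = ~~ a x y.
Proof.
case: tourn => _ [_ compl] /compl /andP [].
by case: (a x y); case: (a y x).
Qed.

Lemma arc_asym (x y : V) : a x y -> a y x = false.
Proof. by move=> axy; rewrite arc_tournament ?axy // arc_part_neq. Qed.

Section SameClass.

Variables (u v : V).
Hypothesis same_uv : part u = part v.
Hypothesis far_vu : ~ dist_le a v u 4.
Hypothesis no_uv_2path : forall w, a u w -> a w v = false.

Lemma far_vu_walk (p : seq V) : path a v p -> last v p = u -> size p <= 4 -> False.
Proof. by move=> walk_p last_p size_p; apply: far_vu; rewrite -last_p; apply: dist_le_walk. Qed.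

Lemma arc_uniform (w : V) : part w != part u -> a u w = a v w.
Proof.
move=> part_w; have part_wv : part w != part v by rewrite -same_uv.
case auw: (a u w); case avw: (a v w) => //.
  by move: (no_uv_2path auw); rewrite arc_tournament 1?eq_sym // avw.
have awu : a w u by rewrite arc_tournament 1?eq_sym // auw.
by case: (far_vu_walk (p := [:: w; u])) => //=; rewrite avw awu.
Qed.

Lemma arc_back_to_u (w : V) : part w != part u -> a v w = false -> a w u.
Proof.
by move=> part_w avw; rewrite arc_tournament 1?eq_sym // arc_uniform // avw.
Qed.

(* The walk starts at an out-neighbour of v; its first vertex that is not an
   out-neighbour of v is preceded by one, possibly with one vertex of the
   class of u in between, and is an in-neighbour of u. *)
Lemma no_walk_back (y : V) (q : seq V) :
  a v y -> path a y q -> last y q = v -> False.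
Proof.
have [n] := ubnP (size q); elim: n q y => // n IH [|z q] y /= size_q avy.
  by move=> _ eq_yv; rewrite eq_yv arcF_same_part in avy.
case/andP=> ayz walk_q last_q.
have part_y : part y != part u by rewrite same_uv eq_sym arc_part_neq.
case: (eqVneq (part z) (part u)) => part_z; last first.
  case avz: (a v z); first exact: (IH q z).
  by apply: (far_vu_walk (p := [:: y; z; u])) => //=; rewrite avy ayz arc_back_to_u.
case: q walk_q last_q size_q => [|w q] /=.
  by move=> _ eq_zv; rewrite eq_zv in ayz; rewrite (arc_asym ayz) in avy.
case/andP=> azw walk_q last_q size_q.
have part_w : part w != part u by rewrite -part_z eq_sym arc_part_neq.
case avw: (a v w); first by apply: (IH q w) => //; rewrite ltnW.
apply: (far_vu_walk (p := [:: y; z; w; u])) => //=.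
by rewrite avy ayz azw arc_back_to_u.
Qed.

Lemma no_uv_walk (p : seq V) : u != v -> path a u p -> last u p = v -> False.
Proof.
case: p => [|x p] /= neq_uv; first by move=> _ eq_uv; rewrite eq_uv eqxx in neq_uv.
case/andP=> aux walk_p; apply: (@no_walk_back x p) => //.
by rewrite -arc_uniform // eq_sym arc_part_neq.
Qed.

End SameClass.

Lemma dist_le2_of_far_back (u v : V) (n : nat) :
  u != v -> dist_le a u v n -> ~ dist_le a v u 4 -> dist_le a u v 2.
Proof.
move=> neq_uv [p [/andP [walk_p _] last_p _]] far_vu.
case: (eqVneq (part u) (part v)) => part_uv; last first.
  case auv: (a u v); first by exists [:: v]; rewrite /dpath /= auv inE neq_uv.
  case: (far_vu_walk far_vu (p := [:: u])) => //=.
  by rewrite arc_tournament // auv.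
have [/existsP [w /andP [auw awv]] | no_2path] := boolP [exists w, a u w && a w v].
  by apply: (dist_le_walk (p := [:: w; v])) => //=; rewrite auw awv.
have no_uv_2path w : a u w -> a w v = false.
  by move=> auw; apply: contraNF no_2path => awv; apply/existsP; exists w; rewrite auw.
by case: (no_uv_walk part_uv far_vu no_uv_2path neq_uv walk_p last_p).
Qed.

End MultipartiteTournament.

Theorem lemma24 (r : nat) (V W : finType) (a : rel V) (h : rel W)
  (rho : V -> V -> W) (part : V -> 'I_r) (k : nat) (u v : V) :
  2 <= r ->
  multipartite_tournament a part ->
  5 <= k ->
  closure_arc a h rho (k - 1) u v ->
  ~ closure_arc a h rho (k - 1) v u ->
  dist_le a u v 2.
Proof.
move=> _ tourn k_ge5 [neq_uv [p [path_p last_p _]]] not_closure_vu.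
apply: (dist_le2_of_far_back tourn neq_uv (n := size p)); first by exists p.
move=> /(dist_le_widen (m := k - 1)) dist_vu; apply: not_closure_vu.
apply: closure_arc_of_dist_le; first by rewrite eq_sym.
by apply: dist_vu; rewrite leq_subRL ?(leq_trans _ k_ge5).
Qed.
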